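(* In $\mathbb R^2$ with coordinates $(a,b)$, let $T=1$, $U=[-1,1]$, $f\equiv0$, $v_u(a,b)=(u,-au)$, $\ell(a,b)=b$, and $\vartheta=\delta_0\otimes\eta$ with $\eta$ a probability measure on $\mathbb R$ with finite first moment. Let $I[u]=\int\ell\,d\mu_1[u]$. Then: (i) the constant control $\bar u\equiv0$ satisfies the maximum condition of the Pontryagin Maximum Principle, with dual state $\bar p_t(a,b)=-b$, and $I[\bar u]=\int b\,d\eta(b)$; (ii) the constant control $u\equiv1$ gives $\mu_t=[(a,b)\mapsto(a+t,\,b-at-t^2/2)]_\sharp\vartheta$ and $I[u]=\int b\,d\eta(b)-\tfrac12<I[\bar u]$, and $u\equiv1$ is a global minimizer of $I$ over $\mathcal U=L_\infty([0,1];[-1,1])$; (iii) every constant control $u\equiv c$ with $c\in[-1,1]\setminus\{0\}$ satisfies $I[u]<I[\bar u]$, so $\bar u$ is not optimal.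
   Context: For $u\in\mathcal U$, $\mu[u]$ is the distributional solution of $\partial_t\mu_t+\nabla\cdot(v_{u(t)}\mu_t)=0$, $\mu_0=\vartheta$, i.e. the push-forward of $\vartheta$ by the flow of $\dot a=u(t)$, $\dot b=-a\,u(t)$. The maximum condition for $\bar u$ means: for a.e. $t$, $\bar u(t)\in\arg\max_{w\in U}\int\nabla\bar p_t\cdot v_w\,d\bar\mu_t$, where $\bar p$ solves $\partial_t\bar p+\nabla\bar p\cdot v_{\bar u(t)}=0$, $\bar p_1=-\ell$. $\otimes$ denotes product measure and $\sharp$ push-forward. *)

From HB Require Import structures.
From mathcomp Require Import all_boot all_order all_algebra.
From mathcomp Require Import all_classical all_reals all_analysis.
Set Implicit Arguments. Unset Strict Implicit. Unset Printing Implicit Defensive.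
Import Order.TTheory GRing.Theory Num.Theory.
Import numFieldNormedType.Exports.
Local Open Scope classical_set_scope.
Local Open Scope ring_scope.

Section example.
Context {R : realType}.

Definition vfield (w : R) (x : R * R) : R * R := (w, - x.1 * w).

Definition ell (x : R * R) : R := x.2.

(* admissible controls: (representatives of) L_oo([0,1];[-1,1]) *)
Definition admissible (u : R -> R) : Prop :=
  measurable_fun (`[0%R, 1%R] : set R) u /\ forall t : R, 0 <= t <= 1 -> -1 <= u t <= 1.

(* Caratheodory (integral) form of the flow of  a' = u(t), b' = - a u(t) *)
Definition flowA (u : R -> R) (t a : R) : R :=
  a + Rintegral lebesgue_measure (`[0%R, t] : set R) u.

Definition flow (u : R -> R) (t : R) (x : R * R) : R * R :=
  (flowA u t x.1,
   x.2 - Rintegral lebesgue_measure (`[0%R, t] : set R) (fun s => flowA u s x.1 * u s)).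

Definition theta (eta : probability R R) : set (R * R) -> \bar R :=
  (\d_(0%R : R) \x eta)%E.

Definition mu_state (eta : probability R R) (u : R -> R) (t : R)
  : set (R * R) -> \bar R :=
  pushforward (theta eta) (flow u t).

Definition cost (eta : probability R R) (u : R -> R) : \bar R :=
  (\int[mu_state eta u 1]_x (ell x)%:E)%E.

Definition dual_state (u : R -> R) (p : R -> R * R -> R) : Prop :=
  (forall x, p 1 x = - ell x) /\
  forall t : R, 0 <= t <= 1 -> forall x : R * R,
    [/\ differentiable (p t) x,
        derivable (fun s => p s x) t 1 &
        derive1 (fun s => p s x) t + 'D_(vfield (u t) x) (p t) x = 0].

Definition ham (eta : probability R R) (u : R -> R) (p : R -> R * R -> R)
  (t w : R) : \bar R :=
  (\int[mu_state eta u t]_x ('D_(vfield w x) (p t) x)%:E)%E.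

Definition max_condition (eta : probability R R) (u : R -> R)
  (p : R -> R * R -> R) : Prop :=
  {ae lebesgue_measure, forall t : R, 0 <= t <= 1 ->
     -1 <= u t <= 1 /\
     forall w : R, -1 <= w <= 1 -> (ham eta u p t w <= ham eta u p t (u t))%E}.

End example.

(* The flow of  a' = u, b' = -a u  starting from (a, b) is explicit:
   with A(t) = \int_0^t u, it maps (a, b) to (a + A(t), b - a A(t) - K(t)),
   where K(t) = \int_0^t A u.  Since the initial measure is delta_0 (x) eta,
   only a = 0 matters, so every cost is  I[u] = \int b d eta - K(1).
   For a constant control c we get K(1) = c^2/2, and for any admissible
   control |A s u s| <= s gives K(1) <= 1/2: hence u = 1 is a global
   minimizer and every constant c <> 0 beats ubar = 0.  For ubar the flow
   is the identity, pbar_t(a, b) = -b is linear and constant in time, so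
   the dual equation holds, and the Hamiltonian \int a w d theta vanishes
   identically in w, which gives the maximum condition. *)
From HB Require Import structures.
From mathcomp Require Import all_boot all_order all_algebra.
From mathcomp Require Import all_classical all_reals all_analysis.
From mathcomp Require Import ring lra measurable_realfun.
Import Order.TTheory GRing.Theory Num.Theory.
Import numFieldNormedType.Exports.
Local Open Scope classical_set_scope.
Local Open Scope ring_scope.

Section integrals_on_segments.
Context (R : realType).
Notation mu := (@lebesgue_measure R).

Lemma lebesgue_itv0_length (t : R) : 0 <= t -> fine (mu `[0, t]) = t.
Proof.
move=> t0; rewrite lebesgue_measure_itv/=; case: ifPn => [_|].
  by rewrite oppr0 adde0.
by rewrite lte_fin -leNgt => h; apply/esym/eqP; rewrite eq_le h t0.
Qed.

Lemma Rintegral_cst_itv0 (c t : R) : 0 <= t -> \int[mu]_(s in `[0, t]) c = c * t.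
Proof. by move=> t0; rewrite Rintegral_cst// lebesgue_itv0_length. Qed.

Lemma continuous_integrable_itv0 (f : R -> R) (t : R) : continuous f ->
  mu.-integrable `[0, t] (EFin \o f).
Proof.
move=> cf; apply: continuous_compact_integrable; first exact: segment_compact.
exact: continuous_subspaceT.
Qed.

Lemma Rintegral_id_itv0 (t : R) : 0 <= t -> \int[mu]_(s in `[0, t]) s = t ^+ 2 / 2.
Proof.
rewrite le_eqVlt => /predU1P[<-|t0].
  by rewrite set_itv1 Rintegral_set1 expr0n/= mul0r.
pose F x : R := x ^+ 2 / 2.
have cF : continuous F.
  by move=> x; apply/differentiable_continuous; rewrite -derivable1_diffP.
rewrite /Rintegral (@continuous_FTC2 _ _ F)//=.
- by rewrite /F expr0n/= mul0r subr0.
- by apply: continuous_subspaceT => x; exact: cvg_id.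
- split; first by [].
  + exact/cvg_at_right_filter/cF.
  + exact/cvg_at_left_filter/cF.
- move=> x _; rewrite /F derive1Mr ?exprn_derivable// exp_derive1 expr1.
  by rewrite -mulr_natl mulrC mulrA mulVf ?mul1r// pnatr_eq0.
Qed.

Lemma bounded_integrable_itv0 (f : R -> R) (t : R) : 0 <= t ->
  measurable_fun `[0, t] f -> (forall s, 0 <= s <= t -> `|f s| <= 1) ->
  mu.-integrable `[0, t] (EFin \o f).
Proof.
move=> t0 mf fb; apply: measurable_bounded_integrable => //.
  have := lebesgue_measure_itv `[0%R, t]; rewrite /= => ->.
  by case: ifPn => _; rewrite ?ltry.
exists 1; split => // M M1 x /= xA; apply: le_trans (ltW M1).
by apply: fb; move: xA; rewrite /= in_itv.
Qed.

Lemma one_in_unit_itv : (0 : R) <= 1 <= (1 : R).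
Proof. by rewrite ler01 lexx. Qed.

Lemma itv0_subset (s t : R) : s <= t -> `[0, s] `<=` (`[0, t] : set R).
Proof.
move=> st r /=; rewrite !in_itv/= => /andP[-> rs].
exact: le_trans rs st.
Qed.

End integrals_on_segments.

Section flow_of_controls.
Context {R : realType}.
Notation mu := (@lebesgue_measure R).

Definition cumul (u : R -> R) (t : R) : R := \int[mu]_(s in `[0, t]) u s.

Definition drift (u : R -> R) : R := \int[mu]_(s in `[0, 1]) (cumul u s * u s).

Lemma flow_cst (c t : R) (x : R * R) : 0 <= t ->
  flow (fun _ => c) t x =
  (x.1 + c * t, x.2 - (x.1 * c * t + c ^+ 2 * (t ^+ 2 / 2))).
Proof.
move=> t0; have flowA_cst s : 0 <= s -> flowA (fun _ => c) s x.1 = x.1 + c * s.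
  by move=> s0; rewrite /flowA Rintegral_cst_itv0.
rewrite /flow flowA_cst//; congr (_, _ - _).
transitivity (\int[mu]_(s in `[0, t]) (x.1 * c + c ^+ 2 * s)).
  apply: eq_Rintegral => s; rewrite inE/= in_itv/= => /andP[s0 _].
  by rewrite flowA_cst//; ring.
have id_int : mu.-integrable `[0, t] (EFin \o id).
  by apply: continuous_integrable_itv0 => ?; exact: cvg_id.
rewrite RintegralD //; last 2 first.
- by apply: continuous_integrable_itv0 => ?; exact: cvg_cst.
- by apply: continuous_integrable_itv0 => y; apply: cvgM; [exact: cvg_cst|exact: cvg_id].
by rewrite Rintegral_cst_itv0// RintegralZl// Rintegral_id_itv0.
Qed.

Section admissible_control.
Context {u : R -> R} (u_meas : measurable_fun (`[0, 1] : set R) u)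
  (u_bound : forall t : R, 0 <= t <= 1 -> -1 <= u t <= 1).

Lemma control_norm_le1 (s : R) : 0 <= s <= 1 -> `|u s| <= 1.
Proof. by move=> /u_bound; rewrite ler_norml. Qed.

Lemma control_integrable {s : R} : 0 <= s <= 1 ->
  mu.-integrable `[0, s] (EFin \o u).
Proof.
case/andP=> s0 s1; apply: bounded_integrable_itv0 => //.
  by apply: measurable_funS u_meas => //; exact: itv0_subset.
move=> r /andP[r0 rs]; apply: control_norm_le1.
by rewrite r0 (le_trans rs).
Qed.

Lemma cumul_bound (s : R) : 0 <= s <= 1 -> `|cumul u s| <= s.
Proof.
move=> hs; have /andP[s0 s1] := hs.
rewrite /cumul; apply: le_trans (le_normr_Rintegral _ (control_integrable hs)) _ => //.
rewrite -[leRHS]mul1r -Rintegral_cst_itv0//.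
have r_in r : 0 <= r <= s -> 0 <= r <= 1.
  by case/andP=> r0 rs; rewrite r0 (le_trans rs).
apply: le_Rintegral => //.
- apply: bounded_integrable_itv0 => //.
    apply: measurableT_comp => //; exact: measurable_funS u_meas.
  by move=> r /r_in ?; rewrite normr_id control_norm_le1.
- by apply: continuous_integrable_itv0 => ?; exact: cvg_cst.
- by move=> r; rewrite /= in_itv/= => /r_in; exact: control_norm_le1.
Qed.

(* A is continuous, hence A u is integrable on [0, 1]. *)
Lemma cumul_control_integrable :
  mu.-integrable `[0, 1] (EFin \o (fun s => cumul u s * u s)).
Proof.
have cA : {within `[0, 1], continuous cumul u}.
  exact: (parameterized_integral_continuous ler01 (control_integrable (one_in_unit_itv R))).
apply: bounded_integrable_itv0 => //.
  by apply: measurable_funM => //; exact: subspace_continuous_measurable_fun.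
move=> s hs; rewrite normrM -[1]mulr1 ler_pM// ?control_norm_le1//.
by case/andP: (hs) => _ s1; apply: le_trans s1; exact: cumul_bound.
Qed.

(* K <= \int_0^1 s ds = 1/2. *)
Lemma drift_le_half : drift u <= 1 / 2.
Proof.
rewrite -[X in X / 2](expr1n _ 2) -Rintegral_id_itv0 //.
apply: le_Rintegral => //; first exact: cumul_control_integrable.
  by apply: continuous_integrable_itv0 => ?; exact: cvg_id.
move=> s; rewrite /= in_itv/= => hs.
apply: le_trans (ler_norm _) _; rewrite normrM -[leRHS]mulr1.
by rewrite ler_pM ?cumul_bound ?control_norm_le1.
Qed.

Lemma flow1_admissible (x : R * R) :
  flow u 1 x = (x.1 + cumul u 1, x.2 - x.1 * cumul u 1 - drift u).
Proof.
have xu_int : mu.-integrable `[0, 1] (EFin \o (fun s => x.1 * u s)).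
  rewrite (_ : EFin \o _ = (fun s => x.1%:E * (EFin \o u) s))%E.
    exact/integrableZl/control_integrable/one_in_unit_itv.
  by apply/funext => s; rewrite /= EFinM.
rewrite /flow /flowA -/(cumul u 1) /=; congr (_, _).
transitivity (x.2 - \int[mu]_(s in `[0, 1]) (x.1 * u s + cumul u s * u s)).
  by congr (_ - _); apply: eq_Rintegral => s _; rewrite mulrDl.
rewrite RintegralD ?cumul_control_integrable// RintegralZl//; last first.
  exact/control_integrable/one_in_unit_itv.
by rewrite -/(cumul u 1) -/(drift u); ring.
Qed.

End admissible_control.

End flow_of_controls.

Section cost_of_affine_flows.
Context {R : realType} {eta : probability R R}.

Lemma theta_slice (E : set (R * R)) : measurable E ->
  theta eta E = eta [set y | E (0%R, y)].
Proof.
move=> mE; rewrite /theta /product_measure1 integral_dirac//.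
  rewrite diracT mul1e /= /xsection; congr (eta _).
  by apply/seteqP; split => y /=; rewrite inE.
exact: (@measurable_fun_xsection _ _ R R R eta E mE).
Qed.

Local Open Scope ereal_scope.

Lemma integral_pushforward_theta (F : R * R -> R * R) (h : R * R -> \bar R) :
  measurable_fun setT F -> measurable_fun setT h ->
  eta.-integrable setT (fun y => h (F (0%R, y))) ->
  \int[pushforward (theta eta) F]_x h x = \int[eta]_y h (F (0%R, y)).
Proof.
move=> mF mh ih.
have mG : measurable_fun setT (fun y : R => F (0%R, y)).
  by apply: measurableT_comp => //; exact: measurable_fun_pair.
rewrite (eq_measure_integral (pushforward eta (fun y => F (0%R, y)))).
  by rewrite integral_pushforward.
move=> A mA _.
have mFA : measurable (F @^-1` A) by rewrite -[X in measurable X]setTI; exact: mF.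
change (theta eta (F @^-1` A) = eta ((fun y => F (0%R, y)) @^-1` A)).
by rewrite theta_slice.
Qed.

Lemma cost_affine_flow (eta_int : eta.-integrable setT (fun x : R => x%:E))
  {u : R -> R} {c K : R} :
  (forall x, flow u 1 x = (x.1 + c, x.2 - x.1 * c - K)%R) ->
  cost eta u = \int[eta]_x x%:E - K%:E.
Proof.
move=> flowE; rewrite /cost /mu_state.
have -> : flow u 1 = (fun x => (x.1 + c, x.2 - x.1 * c - K)%R).
  by apply/funext => x; rewrite flowE.
have cst_int : eta.-integrable setT (fun=> K%:E) by exact: finite_measure_integrable_cst.
rewrite integral_pushforward_theta /ell /=.
- under eq_integral do rewrite mul0r subr0 EFinB.
  rewrite integralB_EFin// integral_cst// EFinN; congr (_ - _).
  by rewrite -[RHS]mule1; congr (_ * _); exact: probability_setT.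
- apply: measurable_fun_pair.
    by apply: measurable_funD => //; exact: measurable_fst.
  apply: measurable_funB => //; apply: measurable_funB; first exact: measurable_snd.
  by apply: measurable_funM => //; exact: measurable_fst.
- by apply/measurable_EFinP; exact: measurable_snd.
- under eq_fun do rewrite mul0r subr0 EFinB.
  exact: integrableB.
Qed.

Lemma cost_cst (eta_int : eta.-integrable setT (fun x : R => x%:E)) (c : R) :
  cost eta (fun _ => c) = \int[eta]_x x%:E - (c ^+ 2 / 2)%:E.
Proof.
apply: (cost_affine_flow eta_int (c := c)) => x.
by rewrite flow_cst//; congr (_, _); ring.
Qed.

End cost_of_affine_flows.

Section dual_state_of_zero_control.
Context (R : realType).

(* pbar_t = -b is a linear form on R^2, so its directional derivative is -v.2. *)
Definition neg_snd (x : R * R) : R := - x.2.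

Lemma neg_snd_linear : linear_for *:%R neg_snd.
Proof. by move=> a x y; rewrite /neg_snd /=; ring. Qed.

HB.instance Definition _ :=
  GRing.isLinear.Build R (R * R)%type R *:%R neg_snd neg_snd_linear.

Lemma neg_snd_continuous : continuous neg_snd.
Proof. by move=> x; apply: cvgN; exact: cvg_snd. Qed.

Lemma neg_snd_differentiable (x : R * R) : differentiable neg_snd x.
Proof. exact: linear_differentiable neg_snd_continuous. Qed.

Lemma derive_neg_snd (v x : R * R) : 'D_v neg_snd x = - v.2.
Proof.
rewrite deriveE ?neg_snd_differentiable//.
rewrite (diff_lin _ neg_snd_continuous); first by [].
exact: neg_snd_differentiable.
Qed.

(* Along ubar = 0 the state stays theta, on which a = 0: the Hamiltonian
   \int a w d theta vanishes for every w. *)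
Lemma ham_zero_control (eta : probability R R) (t w : R) : 0 <= t ->
  ham eta (fun _ => 0) (fun (_ : R) (x : R * R) => - x.2) t w = 0%E.
Proof.
move=> t0; rewrite /ham /mu_state.
have -> : flow (fun _ => 0) t = id.
  by apply/funext => x; rewrite flow_cst// expr0n/= !(mul0r, mulr0, addr0, subr0); case: x.
have -> : (fun x => ('D_(vfield w x) (fun y : R * R => - y.2) x)%:E) =
           (fun x : R * R => (x.1 * w)%:E).
  by apply/funext => x; rewrite (derive_neg_snd (vfield w x) x) /= mulNr opprK.
rewrite integral_pushforward_theta //=.
- by under eq_integral do rewrite mul0r; rewrite integral0.
- by apply/measurable_EFinP; apply: measurable_funM => //; exact: measurable_fst.
- by under eq_fun do rewrite mul0r; exact: finite_measure_integrable_cst.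
Qed.

End dual_state_of_zero_control.

Theorem mainTheorem4 (R : realType) (eta : probability R R)
  (eta_int : eta.-integrable setT (fun x : R => x%:E)) :
  let ubar := fun _ : R => 0 : R in
  let pbar := fun (_ : R) (x : R * R) => - x.2 in
  let one := fun _ : R => 1 : R in
  (* (i) *)
  [/\ admissible ubar, dual_state ubar pbar, max_condition eta ubar pbar &
      cost eta ubar = (\int[eta]_x x%:E)%E] /\
  (* (ii) *)
  [/\ admissible one,
      (forall t : R, 0 <= t <= 1 ->
         mu_state eta one t =
         pushforward (theta eta)
           (fun x : R * R => (x.1 + t, x.2 - x.1 * t - t ^+ 2 / 2))),
      cost eta one = (\int[eta]_x x%:E - (1 / 2)%:E)%E,
      (cost eta one < cost eta ubar)%E &
      (forall u, admissible u -> (cost eta one <= cost eta u)%E)] /\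
  (* (iii) *)
      (forall c : R, -1 <= c <= 1 -> c != 0 ->
        (cost eta (fun _ => c) < cost eta ubar)%E).
Proof.
move=> ubar pbar one.
have [r Ir] : exists r : R, (\int[eta]_x x%:E)%E = r%:E.
  by exists (fine (\int[eta]_x x%:E)%E); rewrite fineK// integrable_fin_num.
have cost_ubar : cost eta ubar = r%:E by rewrite cost_cst// expr0n/= mul0r sube0.
have cost_one : cost eta one = (r - 1 / 2)%:E by rewrite cost_cst// expr1n Ir.
have cst_admissible c : -1 <= c <= 1 -> admissible (fun _ : R => c).
  by move=> hc; split=> //; exact: measurable_cst.
split; [|split].
- split.
  + by apply: cst_admissible; lra.
  + split=> // t _ x; split; [exact: neg_snd_differentiable|exact: derivable_cst|].
    by rewrite derive1_cst add0r derive_neg_snd /= mulr0 oppr0.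
  + apply: aeW => t /andP[t0 _]; split; first by rewrite /ubar; lra.
    by move=> w _; rewrite !ham_zero_control.
  + by rewrite cost_ubar Ir.
- split.
  + by apply: cst_admissible; lra.
  + move=> t /andP[t0 _]; congr (pushforward _ _); apply/funext => x.
    by rewrite flow_cst//; congr (_, _); ring.
  + by rewrite cost_one Ir EFinB.
  + by rewrite cost_one cost_ubar lte_fin; lra.
  + move=> u [u_meas u_bound].
    rewrite cost_one (cost_affine_flow eta_int (flow1_admissible u_meas u_bound)).
    by rewrite Ir -EFinB lee_fin lerD2l lerN2 (drift_le_half u_meas u_bound).
- move=> c _ c_neq0; rewrite cost_cst// cost_ubar Ir -EFinB lte_fin.
  suff : 0 < c ^+ 2 by lra.
  by rewrite exprn_even_gt0.
Qed.
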